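(* Let $X,Y\subseteq\Sigma^*$ be regular languages. Then $\overrightarrow{\mathrm{AH}}_{\mathrm{ned}}(X,Y)\le\overrightarrow{\mathrm{AC}}(X,Y)$.
   Context: An edit path from $x$ to $y$ is a sequence $p=(a_1,b_1)\cdots(a_n,b_n)$ with $(a_i,b_i)\in(\Sigma\cup\{\varepsilon\})^2\setminus\{(\varepsilon,\varepsilon)\}$, $a_1\cdots a_n=x$, $b_1\cdots b_n=y$; $|p|=n$ and $\mathrm{wgt}(p)=|\{i:a_i\ne b_i\}|$. $\mathrm{ed}(x,y)=\min_p\mathrm{wgt}(p)$; $\mathrm{ned}(x,y)=\min_p\mathrm{wgt}(p)/|p|$ ($\mathrm{ned}(\varepsilon,\varepsilon)=0$). $\overrightarrow{\mathrm{AH}}_{\mathrm{ned}}(X,Y)=\lim_{k\to\infty}\sup_{x\in X,|x|\ge k}\inf_{y\in Y}\mathrm{ned}(x,y)$ and $\overrightarrow{\mathrm{AC}}(X,Y)=\lim_{n\to\infty}\sup_{x\in X,|x|\ge n}\inf_{y\in Y}\frac{\mathrm{ed}(x,y)}{|x|}$. *)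

From HB Require Import structures.
From mathcomp Require Import all_boot all_order all_algebra.
From mathcomp Require Import all_classical all_reals all_analysis.
Set Implicit Arguments. Unset Strict Implicit. Unset Printing Implicit Defensive.
Import Order.TTheory GRing.Theory Num.Theory.
Local Open Scope classical_set_scope.
Local Open Scope ring_scope.

Section EditDistance.
Variable Sigma : finType.

(* an edit operation (a,b) with a,b in Sigma ∪ {ε}; ε is None *)
Definition edit_op := (option Sigma * option Sigma)%type.

Definition is_edit_path (x y : seq Sigma) (p : seq edit_op) : bool :=
  [&& all (fun ab : edit_op => (ab.1 != None) || (ab.2 != None)) p,
      pmap id (unzip1 p) == x & pmap id (unzip2 p) == y].

Definition wgt (p : seq edit_op) : nat := count (fun ab : edit_op => ab.1 != ab.2) p.

Variable R : realType.

Definition ed (x y : seq Sigma) : \bar R :=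
  ereal_inf [set ((wgt p)%:R)%:E | p in [set p | is_edit_path x y p]].

Definition ned (x y : seq Sigma) : \bar R :=
  if (x == [::]) && (y == [::]) then 0%E
  else ereal_inf [set ((wgt p)%:R / (size p)%:R)%:E | p in [set p | is_edit_path x y p]].

Definition AH_ned (X Y : set (seq Sigma)) : \bar R :=
  limn (fun k : nat =>
    ereal_sup [set ereal_inf [set ned x y | y in Y]
              | x in [set x | X x /\ (k <= size x)%N]]).

Definition AsymCost (X Y : set (seq Sigma)) : \bar R :=
  limn (fun n : nat =>
    ereal_sup [set ereal_inf [set (ed x y * ((size x)%:R^-1)%:E)%E | y in Y]
              | x in [set x | X x /\ (n <= size x)%N]]).

End EditDistance.

Definition regular (Sigma : finType) (L : set (seq Sigma)) : Prop :=
  exists (Q : finType) (q0 : Q) (delta : Q -> Sigma -> Q) (F : pred Q),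
    forall w, L w <-> F (foldl delta q0 w).

(* Every edit path from a nonempty x spells x along its upper row, so it has
   at least |x| steps; hence wgt(p)/|p| <= wgt(p)/|x| and ned(x,y) <= ed(x,y)/|x|
   for every y. Taking the infimum over Y, the supremum over long words of X and
   the limit (both sequences are nonincreasing in the length threshold, so the
   limits exist) gives the inequality. *)

From HB Require Import structures.
From mathcomp Require Import all_boot all_order all_algebra.
From mathcomp Require Import all_classical all_reals all_analysis.
Import Order.TTheory GRing.Theory Num.Theory.
Set Implicit Arguments. Unset Strict Implicit. Unset Printing Implicit Defensive.
Local Open Scope classical_set_scope.
Local Open Scope ring_scope.

Section EditPath.
Variables (Sigma : finType) (R : realType).
Implicit Types (x y : seq Sigma) (p : seq (edit_op Sigma)).

Lemma size_edit_path x y p : is_edit_path x y p -> (size x <= size p)%N.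
Proof.
case/and3P=> _ /eqP <- _.
by rewrite size_pmap (leq_trans (count_size _ _)) // size_map.
Qed.

Lemma ned_le_wgt_div x y p : x != [::] -> is_edit_path x y p ->
  (ned R x y <= ((wgt p)%:R / (size p)%:R)%:E)%E.
Proof.
move=> x_nil xyp; rewrite /ned (negbTE x_nil) /=.
by apply: ereal_inf_lbound; exists p.
Qed.

Lemma ned_le_ed x y : x != [::] ->
  (ned R x y <= ed R x y * ((size x)%:R^-1)%:E)%E.
Proof.
move=> x_nil; have x_gt0 : (0 < size x)%N by case: x x_nil.
rewrite lee_pdivlMr ?ltr0n //; apply: le_ereal_inf_tmp => _ [p xyp <-].
have x_le_p := size_edit_path xyp.
have p_gt0 : (0 < size p)%N := leq_trans x_gt0 x_le_p.
apply: le_trans (lee_wpmul2r _ (ned_le_wgt_div x_nil xyp)) _; first by rewrite lee_fin.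
rewrite -EFinM lee_fin mulrAC ler_pdivrMr ?ltr0n //.
by rewrite ler_wpM2l ?ler0n ?ler_nat.
Qed.

End EditPath.

Section TailSup.
Variables (T : Type) (R : realType) (len : T -> nat) (X : set T).

Definition tail_sup (f : T -> \bar R) (k : nat) : \bar R :=
  ereal_sup [set f x | x in [set x | X x /\ (k <= len x)%N]].

Lemma tail_sup_nonincreasing f : {homo tail_sup f : m n / (m <= n)%N >-> (n <= m)%E}.
Proof.
move=> m n mn; apply: ereal_sup_le => _ [x [Xx nx] <-].
by exists x => //; split => //; apply: leq_trans mn nx.
Qed.

Lemma is_cvgn_tail_sup f : cvgn (tail_sup f).
Proof. exact/ereal_nonincreasing_is_cvgn/tail_sup_nonincreasing. Qed.

Lemma tail_sup_le f g k : (forall x, (k <= len x)%N -> (f x <= g x)%E) ->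
  (tail_sup f k <= tail_sup g k)%E.
Proof.
move=> fg; apply: ge_ereal_sup => _ [x [Xx kx] <-].
by apply: le_ereal_sup_tmp; exists (g x); [exists x | apply: fg].
Qed.

End TailSup.

Theorem mainTheorem15 (R : realType) (Sigma : finType) (X Y : set (seq Sigma)) :
  regular X -> regular Y -> (AH_ned R X Y <= AsymCost R X Y)%E.
Proof.
move=> _ _.
pose f x := ereal_inf [set ned R x y | y in Y].
pose g x := ereal_inf [set (ed R x y * ((size x)%:R^-1)%:E)%E | y in Y].
change (limn (tail_sup size X f) <= limn (tail_sup size X g))%E.
apply: lee_lim; [exact: is_cvgn_tail_sup.. |].
exists 1%N => // k k_gt0; apply: tail_sup_le => x kx.
have x_nil : x != [::] by rewrite -size_eq0 -lt0n (leq_trans k_gt0 kx).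
apply: le_ereal_inf_tmp => _ [y Yy <-].
apply: le_trans (ned_le_ed R y x_nil).
by apply: ereal_inf_lbound; exists y.
Qed.
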